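(* Let $\mathcal{A}$ be a unital algebra over a field $F$ with $\operatorname{char}(F)\neq2$, having an idempotent $e\neq 0,1$, and write $e^{\perp}=1-e$. Assume that for every $x\in\mathcal{A}$: if $exe\cdot e\mathcal{A}e^{\perp}=\{0\}=e^{\perp}\mathcal{A}e\cdot exe$ then $exe=0$, and if $e\mathcal{A}e^{\perp}\cdot e^{\perp}xe^{\perp}=\{0\}=e^{\perp}xe^{\perp}\cdot e^{\perp}\mathcal{A}e$ then $e^{\perp}xe^{\perp}=0$. Then $\operatorname{JCent}(\mathcal{A})=\operatorname{Cent}(\mathcal{A})$.
   Context: $x\circ y=xy+yx$. $\operatorname{JCent}(\mathcal{A})$: linear $f:\mathcal{A}\to\mathcal{A}$ with $f(x\circ y)=f(x)\circ y$ for all $x,y$. $\operatorname{Cent}(\mathcal{A})$: linear $f$ with $f(xy)=f(x)y=xf(y)$ for all $x,y$. *)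

From HB Require Import structures.
From mathcomp Require Import all_boot all_order all_algebra.
Set Implicit Arguments. Unset Strict Implicit. Unset Printing Implicit Defensive.
Import GRing.Theory.
Local Open Scope ring_scope.

Definition jprod (A : pzRingType) (x y : A) : A := x * y + y * x.

Definition is_jcent (F : pzRingType) (A : algType F) (f : {linear A -> A}) : Prop :=
  forall x y : A, f (jprod x y) = jprod (f x) y.

Definition is_cent (F : pzRingType) (A : algType F) (f : {linear A -> A}) : Prop :=
  forall x y : A, f (x * y) = f x * y /\ f (x * y) = x * f y.

From HB Require Import structures.
From mathcomp Require Import all_boot all_order all_algebra.
Set Implicit Arguments. Unset Strict Implicit. Unset Printing Implicit Defensive.
Import GRing.Theory.
Local Open Scope ring_scope.

(* Writing c = f 1, a Jordan centralizer satisfies 2 f(y) = c o y, and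
   c o (x o y) - (c o x) o y = [[c, y], x], so the doubled Jordan identity says
   exactly that every commutator [c, y] is central.  An inner derivation with
   central values kills idempotents, so c commutes with e and
   e [c, y] = [c, e y] is central too.  A central z with e z central
   annihilates e A e^perp and e^perp A e, hence so do its corners e z e and
   e^perp z e^perp, which therefore vanish by the hypotheses; thus [c, y] = 0.
   So c is central and f = c * (-) is a centralizer. *)

Definition commutator (R : pzRingType) (x y : R) : R := x * y - y * x.

Definition central (R : pzRingType) (z : R) : Prop :=
  forall x : R, GRing.comm z x.

Section CentralCommutators.

Variables (R : pzRingType) (c : R).

Lemma jprod_assoc_commutator (x y : R) :
  jprod c (jprod x y) - jprod (jprod c x) y
    = commutator c y * x - x * commutator c y.
Proof.
rewrite /jprod /commutator !mulrDl !mulrDr ?mulrBl ?mulrBr ?mulrN ?mulNr !mulrA.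
set a := c * x * y; set b := c * y * x; set d := x * y * c.
set g := x * c * y; set h := y * c * x; set k := y * x * c.
rewrite opprD addrACA [a + b]addrC addrKA [h + k]addrC addrKA.
by rewrite opprB addrACA [RHS]addrACA [- g + _]addrC.
Qed.

Lemma central_commutator_of_jprod_assoc :
  (forall x y : R, jprod c (jprod x y) = jprod (jprod c x) y) ->
  forall y, central (commutator c y).
Proof.
move=> hassoc y x; apply/eqP.
by rewrite -subr_eq0 -jprod_assoc_commutator hassoc subrr.
Qed.

Lemma commutator_idem_eq0 (e : R) :
  (forall y, central (commutator c y)) -> e * e = e -> commutator c e = 0.
Proof.
move=> hcent he; set d := commutator c e.
have hd : e * d + e * d = d.
  rewrite -{1}(hcent e e) /d /commutator mulrBl mulrBr -!mulrA he.
  by rewrite addrA subrK mulrA he.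
clearbody d; have hed : e * d = 0.
  by apply: (@addrI _ (e * d)); rewrite addr0 -{3}hd mulrDr !mulrA he.
by rewrite -hd hed addr0.
Qed.

Lemma commutator_mull (e y : R) :
  c * e = e * c -> commutator c (e * y) = e * commutator c y.
Proof. by move=> hce; rewrite /commutator mulrBr !mulrA hce. Qed.

End CentralCommutators.

Section Peirce.

Variables (R : pzRingType) (e : R).
Hypothesis he : e * e = e.
Hypothesis hleft : forall x : R,
  (forall a : R, (e * x * e) * (e * a * (1 - e)) = 0) ->
  (forall a : R, ((1 - e) * a * e) * (e * x * e) = 0) ->
  e * x * e = 0.
Hypothesis hright : forall x : R,
  (forall a : R, (e * a * (1 - e)) * ((1 - e) * x * (1 - e)) = 0) ->
  (forall a : R, ((1 - e) * x * (1 - e)) * ((1 - e) * a * e) = 0) ->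
  (1 - e) * x * (1 - e) = 0.

Lemma mulr_idem_compl : e * (1 - e) = 0.
Proof. by rewrite mulrBr mulr1 he subrr. Qed.

Lemma mulr_compl_idem : (1 - e) * e = 0.
Proof. by rewrite mulrBl mul1r he subrr. Qed.

Lemma compl_idem : (1 - e) * (1 - e) = 1 - e.
Proof. by rewrite mulrBl mul1r mulr_idem_compl subr0. Qed.

Lemma central_peirce_eq0 (z : R) : central z -> central (e * z) -> z = 0.
Proof.
move=> zC ezC.
have z_eAf a : z * (e * a * (1 - e)) = 0.
  rewrite -!mulrA mulrA zC ezC -!mulrA (mulrA (1 - e)).
  by rewrite mulr_compl_idem mul0r mulr0.
have z_fAe a : z * ((1 - e) * a * e) = 0.
  rewrite zC -(mulrA _ e z) -ezC -(zC e) -mulrA (mulrA e).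
  by rewrite mulr_idem_compl mul0r mulr0.
have eK x : e * (e * x) = e * x by rewrite mulrA he.
have fK x : (1 - e) * ((1 - e) * x) = (1 - e) * x by rewrite mulrA compl_idem.
have ze0 : z * e = 0.
  have eze : e * z * e = z * e by rewrite -(zC e) -mulrA he.
  rewrite -eze; apply: hleft => a; rewrite eze.
    by rewrite -!mulrA eK (mulrA e) z_eAf.
  by rewrite mulrA -zC z_fAe mul0r.
have zf0 : z * (1 - e) = 0.
  have fzf : (1 - e) * z * (1 - e) = z * (1 - e).
    by rewrite -(zC (1 - e)) -mulrA compl_idem.
  rewrite -fzf; apply: hright => a; rewrite fzf.
    by rewrite mulrA -zC z_eAf mul0r.
  by rewrite -!mulrA fK (mulrA (1 - e)) z_fAe.
by rewrite -[z]mulr1 -(subrK e 1) mulrDr ze0 zf0 addr0.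
Qed.

Lemma central_of_central_commutators (c : R) :
  (forall y, central (commutator c y)) -> central c.
Proof.
move=> hcent y; apply/subr0_eq/(central_peirce_eq0 (hcent y)).
have hce : c * e = e * c by apply/subr0_eq/(commutator_idem_eq0 hcent he).
by rewrite -commutator_mull.
Qed.

End Peirce.

Lemma jprod_mulrnl (R : pzRingType) (x y : R) (n : nat) :
  jprod (x *+ n) y = jprod x y *+ n.
Proof. by rewrite /jprod mulrnDl mulrnAl mulrnAr. Qed.

Lemma jprod_centralE (R : pzRingType) (c y : R) :
  central c -> jprod c y = c * y *+ 2.
Proof. by move=> cC; rewrite /jprod -(cC y) mulr2n. Qed.

Lemma mulr2n_inj (F : fieldType) (V : lmodType F) :
  2%N \notin [pchar F] -> injective (fun v : V => v *+ 2).
Proof.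
move=> hchar u v /eqP.
rewrite -subr_eq0 -mulrnBl -scaler_nat scaler_eq0 subr_eq0.
by case/orP=> [h2|/eqP //]; case/negP: hchar; rewrite inE /= h2.
Qed.

Section JordanCentralizer.

Variables (F : pzRingType) (A : algType F) (f : {linear A -> A}).

Lemma cent_is_jcent : is_cent f -> is_jcent f.
Proof.
move=> hc x y; rewrite /jprod linearD /=.
by case: (hc x y) => -> _; case: (hc y x) => _ ->.
Qed.

Hypothesis hj : is_jcent f.

Lemma jcent_mulr2n (y : A) : f y *+ 2 = jprod (f 1) y.
Proof. by rewrite -hj /jprod mul1r mulr1 -mulr2n raddfMn. Qed.

Lemma jcent_jprod_assoc (x y : A) :
  jprod (f 1) (jprod x y) = jprod (jprod (f 1) x) y.
Proof. by rewrite -!jcent_mulr2n hj jprod_mulrnl. Qed.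

End JordanCentralizer.

Theorem proposition3p7 (F : fieldType) (A : algType F) (e : A)
  (hchar : 2%N \notin [pchar F])
  (he_idem : e * e = e) (he0 : e != 0) (he1 : e != 1)
  (hleft : forall x : A,
      (forall a : A, (e * x * e) * (e * a * (1 - e)) = 0) ->
      (forall a : A, ((1 - e) * a * e) * (e * x * e) = 0) ->
      e * x * e = 0)
  (hright : forall x : A,
      (forall a : A, (e * a * (1 - e)) * ((1 - e) * x * (1 - e)) = 0) ->
      (forall a : A, ((1 - e) * x * (1 - e)) * ((1 - e) * a * e) = 0) ->
      (1 - e) * x * (1 - e) = 0) :
  forall f : {linear A -> A}, is_jcent f <-> is_cent f.
Proof.
move=> f; split; last exact: cent_is_jcent.
move=> hj; set c := f 1.
have cC : central c.
  apply: (central_of_central_commutators he_idem hleft hright).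
  exact/central_commutator_of_jprod_assoc/jcent_jprod_assoc.
have fE y : f y = c * y.
  by apply: (mulr2n_inj hchar); rewrite jcent_mulr2n // jprod_centralE.
by move=> x y; rewrite !fE mulrA; split=> //; rewrite cC -mulrA.
Qed.
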